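(* Let $r=r(n)$ be integers with $r\ge 2$ and $r=o(n^{1/2})$. Then $$\Pr(\mathcal A_3)=\frac{1-o(1)}{1+\frac{(r-1)^3}{n}(1+o(1))}\qquad(n\to\infty).$$ In particular, if $r/n^{1/3}\to c\in[0,\infty)$ then $\Pr(\mathcal A_3)\to 1/(1+c^3)$.
   Context: Random intersecting process: Let $[n]=\{1,\dots,n\}$ and $\binom{[n]}{r}$ the family of $r$-subsets of $[n]$. Choose $e_1$ uniformly at random from $\binom{[n]}{r}$. Given $\mathcal F_i=\{e_1,\dots,e_i\}$, let $\mathcal A(\mathcal F_i)=\{e\in\binom{[n]}{r}: e\notin\mathcal F_i,\ e\cap e_j\neq\emptyset \text{ for all } 1\le j\le i\}$, and choose $e_{i+1}$ uniformly at random from $\mathcal A(\mathcal F_i)$. The process halts when $\mathcal A(\mathcal F_i)=\emptyset$. A star is a collection of sets such that every pair of them has the same one-element intersection $\{x\}$ ($x$ is the kernel); a single set is a $1$-star by convention. For $i\ge1$, $\mathcal A_i$ is the event that at least $i$ edges are chosen and $\mathcal F_i$ is an $i$-star. *)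

From Stdlib Require Import Reals.
From mathcomp Require Import all_boot.

Set Implicit Arguments.
Unset Strict Implicit.
Unset Printing Implicit Defensive.

Definition rsum (T : finType) (P : pred T) (f : T -> R) : R :=
  foldr (fun x acc => Rplus (f x) acc) R0 (enum P).

Definition edge (n r : nat) (e : {set 'I_n}) : bool := #|e| == r.

Definition admissible (n r : nat) (F : seq {set 'I_n}) : pred {set 'I_n} :=
  fun e => [&& edge r e, e \notin F & all (fun f : {set 'I_n} => ~~ [disjoint e & f]) F].

Definition card_adm (n r : nat) (F : seq {set 'I_n}) : nat :=
  #|[pred e | admissible r F e]|.

Definition is_star (n : nat) (F : seq {set 'I_n}) : bool :=
  [exists x : 'I_n, all (fun e => all (fun f => (e == f) || (e :&: f == [set x])) F) F].

(* Pr(A_3): probability that the random intersecting process chooses at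
   least 3 edges and F_3 = {e1,e2,e3} is a 3-star.  e1 uniform among all
   r-sets, e2 uniform in A(F_1), e3 uniform in A(F_2). *)
Definition probA3 (n r : nat) : R :=
  rsum (fun e1 : {set 'I_n} => edge r e1) (fun e1 =>
   rsum (admissible r [:: e1]) (fun e2 =>
    rsum (fun e3 => admissible r [:: e1; e2] e3 && is_star [:: e1; e2; e3])
      (fun e3 =>
        Rmult (Rmult (Rinv (INR #|[pred e : {set 'I_n} | edge r e]|))
                     (Rinv (INR (card_adm r [:: e1]))))
              (Rinv (INR (card_adm r [:: e1; e2])))))).

From Stdlib Require Import Reals Lra.
From mathcomp Require Import all_boot zify.

(* A third edge can only complete a star if the second edge meets e1 in a
   single point x, and then the completions are the r-sets through x avoiding
   the rest of e1 and e2. With B = C(n, r-1), d = r^2/(n-r) and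
   a = (r-1)^3/n, binomial estimates show that all but a fraction 2d of the
   admissible second edges meet e1 in one point, and that for such a pair
   between B(1-2d) and B third edges complete a star while between a(1-2d)B
   and (2d + a(1+d))B admissible ones do not. So each conditional probability
   of a star is 1/(1+a) up to a relative error O(d), and averaging gives
   |Pr(A_3)(1+a) - 1| <= 10 r^2/n, which tends to 0 when r = o(n^(1/2)); when
   moreover r/n^(1/3) -> c, a -> c^3. *)

Set Implicit Arguments.
Unset Strict Implicit.
Unset Printing Implicit Defensive.

Section Counting.
Variables T1 T2 : finType.

Lemma leq_card_in_inj (A : {pred T1}) (B : {pred T2}) (f : T1 -> T2) :
  {in A &, injective f} -> {in A, forall x, f x \in B} -> #|A| <= #|B|.
Proof.
move=> f_inj fAB; have -> : #|A| = #|[set x in A]| by apply: eq_card => x; rewrite inE.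
rewrite -(card_in_imset (f := f)); last by move=> x y; rewrite !inE; apply: f_inj.
by apply/subset_leq_card/subsetP => _ /imsetP[x + ->]; rewrite inE; apply: fAB.
Qed.

Lemma leq_card_onto (A : {set T1}) (B : {pred T2}) (f : T1 -> T2) :
  {in B, forall y, exists2 x, x \in A & y = f x} -> #|B| <= #|A|.
Proof.
move=> f_onto; apply: leq_trans (leq_imset_card f A); apply/subset_leq_card/subsetP.
by move=> y /f_onto[x xA ->]; apply: imset_f.
Qed.

Lemma leq_card_split (A Q : {pred T1}) m k :
  #|[predI A & Q]| <= m -> #|[predD A & Q]| <= k -> #|A| <= m + k.
Proof. by move=> AQ AnQ; rewrite -(cardID Q A) leq_add. Qed.

End Counting.

Section Sets.
Variable T : finType.
Implicit Types (A B e : {set T}) (x y : T).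

Definition draws B k := [set A : {set T} | A \subset B & #|A| == k].

Lemma set1_neq0 x : ([set x] == set0) = false.
Proof. by apply/eqP => /setP/(_ x); rewrite !inE eqxx. Qed.

Lemma in_setI1 e A x : e :&: A = [set x] -> x \in e /\ x \in A.
Proof. move=> eA; have : x \in e :&: A by rewrite eA set11. by rewrite inE => /andP. Qed.

Lemma setD12K e x y : x \in e -> y \in e -> x != y ->
  e = x |: (y |: (e :\ x :\ y)) /\ #|e :\ x :\ y| = #|e| - 2.
Proof.
move=> xe ye xy; have ye' : y \in e :\ x by rewrite !inE eq_sym xy.
split; first by rewrite setD1K // setD1K.
by rewrite (cardsD1 x e) (cardsD1 y (e :\ x)) xe ye' !add1n subn2.
Qed.

Lemma setU1I_set1 A e x : x \in e -> [disjoint A & e] -> (x |: A) :&: e = [set x].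
Proof.
move=> xe Ae; apply/setP => z; rewrite !inE.
by case: eqP => [->|_] //=; case zA: (z \in A); rewrite // (disjointFr Ae).
Qed.

Lemma exists_other_elt A x : x \in A -> A != [set x] -> exists2 y, y \in A & y != x.
Proof.
move=> xA Ax; have /set0Pn[y] : A :\ x != set0.
  by apply: contraNneq Ax => Ax0; rewrite -(setD1K xA) Ax0 setU0.
by rewrite !inE => /andP[yx yA]; exists y.
Qed.

Lemma meetP e A : ~~ [disjoint e & A] -> exists2 y, y \in e & y \in A.
Proof. by rewrite -setI_eq0 => /set0Pn[y]; rewrite inE => /andP[]; exists y. Qed.

Lemma disjointsU1 A e x : x \notin e -> [disjoint A & e] -> [disjoint x |: A & e].
Proof. by move=> xe; rewrite !disjoints_subset subUset sub1set inE xe. Qed.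

Lemma disjoint_draws A B k : A \in draws (~: B) k -> [disjoint A & B].
Proof. by rewrite inE -{2}[B]setCK -subsets_disjoint => /andP[]. Qed.

Lemma setI_set1_neq e A x : 1 < #|A| -> e :&: A = [set x] -> e != A.
Proof.
move=> A_gt1 eA; apply: contraTneq A_gt1 => eq_eA.
by move: eA; rewrite eq_eA setIid => ->; rewrite cards1.
Qed.

End Sets.

Section OrdinalSets.
Variable n : nat.

Lemma cardsC_ord (B : {set 'I_n}) : #|~: B| = n - #|B|.
Proof. by rewrite [#|~: B|]cardsCs setCK card_ord. Qed.

Lemma card_draws_setT k : #|draws [set: 'I_n] k| = 'C(n, k).
Proof. by rewrite cards_draws cardsT card_ord. Qed.

End OrdinalSets.

Section FirstStep.
Variables (n r : nat) (e1 : {set 'I_n}).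
Hypotheses (r_gt1 : 1 < r) (e1_r : #|e1| = r).

Definition one_meet := [pred e | admissible r [:: e1] e & #|e1 :&: e| == 1].

Lemma card_one_meet_ge : r * 'C(n - r, r.-1) <= #|one_meet|.
Proof.
rewrite -{1 2}e1_r -cardsC_ord -cards_draws -cardsX.
have key p : p \in setX e1 (draws (~: e1) r.-1) ->
    [/\ (p.1 |: p.2) :&: e1 = [set p.1], (p.1 |: p.2) :\ p.1 = p.2 & #|p.1 |: p.2| = r].
  case: p => a Q; rewrite inE /= => /andP[ae QD].
  have dQ := disjoint_draws QD; move: QD; rewrite inE => /andP[_ /eqP Q_r].
  have aQ : a \notin Q by apply/negP => /(disjointFr dQ); rewrite ae.
  by rewrite setU1I_set1 // setU1K // cardsU1 aQ Q_r add1n prednK // ltnW.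
apply: (@leq_card_in_inj _ _ _ _ (fun p : 'I_n * {set 'I_n} => p.1 |: p.2)).
  move=> [a Q] [b Q'] /key[/= aQ1 aQ2 _] /key[/= bQ1 bQ2 _] /= eq_ab.
  have eab : a = b by apply: set1_inj; rewrite -aQ1 -bQ1 eq_ab.
  by rewrite -aQ2 -bQ2 eq_ab eab.
move=> p /key[p_e1 _ p_r]; rewrite !inE /admissible /edge /= p_r eqxx /=.
rewrite !inE -setI_eq0 p_e1 set1_neq0 setIC p_e1 cards1 eqxx !andbT.
by apply: setI_set1_neq p_e1; rewrite e1_r.
Qed.

Lemma card_adm1_le : card_adm r [:: e1] <= #|one_meet| + (r * r) * 'C(n, r - 2).
Proof.
apply: (@leq_card_split _ _ (fun e => #|e1 :&: e| == 1)).
  by apply/subset_leq_card/subsetP => e; rewrite !inE.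
rewrite -card_draws_setT; have -> : r * r = #|e1| * #|e1| by rewrite e1_r.
rewrite -!cardsX.
apply: (@leq_card_onto _ _ _ _ (fun p : 'I_n * 'I_n * {set 'I_n} => p.1.1 |: (p.1.2 |: p.2))).
move=> e; rewrite !inE /= unfold_in => /andP[e1e_n1 /and3P[/eqP e_r _ /andP[m _]]].
have : 1 < #|e1 :&: e| by rewrite ltn_neqAle eq_sym e1e_n1 card_gt0 setI_eq0 disjoint_sym.
case/card_gt1P => a [b [+ + ab]]; rewrite !inE => /andP[ae1 ae] /andP[be1 be].
have [e_eq e_ab] := setD12K ae be ab.
by exists ((a, b), e :\ a :\ b); rewrite // !inE ae1 be1 subsetT /= e_ab e_r.
Qed.

End FirstStep.

Section SecondStep.
Variables (n r : nat) (e1 e2 : {set 'I_n}) (x : 'I_n).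
Hypotheses (r_gt1 : 1 < r) (e1_r : #|e1| = r) (e2_r : #|e2| = r).
Hypothesis e12x : e1 :&: e2 = [set x].

Definition stars :=
  [pred e : {set 'I_n} | [&& #|e| == r, e :&: e1 == [set x] & e :&: e2 == [set x]]].

Definition nonstars := [predD [pred e | admissible r [:: e1; e2] e] & stars].

Let e1_gt1 : 1 < #|e1|. Proof. by rewrite e1_r. Qed.
Let e2_gt1 : 1 < #|e2|. Proof. by rewrite e2_r. Qed.

Let x_e1 : x \in e1. Proof. by case: (in_setI1 e12x). Qed.
Let x_e2 : x \in e2. Proof. by case: (in_setI1 e12x). Qed.

Let in_e12 z : z \in e1 -> z \in e2 -> z = x.
Proof. by move=> z1 z2; apply/set1P; rewrite -e12x inE z1. Qed.

Let e1x_r : #|e1 :\ x| = r.-1. Proof. by rewrite -e1_r (cardsD1 x e1) x_e1. Qed.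
Let e2x_r : #|e2 :\ x| = r.-1. Proof. by rewrite -e2_r (cardsD1 x e2) x_e2. Qed.

Lemma star_adm_iff e :
  admissible r [:: e1; e2] e && is_star [:: e1; e2; e] = stars e.
Proof.
have e1_e2 : e1 != e2 := setI_set1_neq e2_gt1 e12x.
rewrite /admissible /is_star /edge /=; apply/idP/idP.
- case/andP => /and5P[-> e_new _ _ _] /existsP[y].
  rewrite !andbT !eqxx /= => /and3P[/andP[y12 y1] /andP[_ y2] _].
  move: e_new; rewrite !inE negb_or => /andP[e1_e e2_e].
  move: y12 y1 y2; rewrite (negbTE e1_e2) e12x !(eq_sym _ e) (negbTE e1_e) (negbTE e2_e) /=.
  by move=> /eqP[<-] /eqP e1e /eqP e2e; rewrite setIC e1e setIC e2e eqxx.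
- case/and3P => -> /eqP ee1 /eqP ee2.
  have e_e1 : e != e1 := setI_set1_neq e1_gt1 ee1.
  have e_e2 : e != e2 := setI_set1_neq e2_gt1 ee2.
  rewrite !inE negb_or e_e1 e_e2 -!setI_eq0 ee1 ee2 set1_neq0 /=.
  apply/existsP; exists x.
  rewrite !eqxx !(eq_sym _ e) (eq_sym e2 e1) (negbTE e_e1) (negbTE e_e2) (negbTE e1_e2) /=.
  by rewrite e12x (setIC e1 e) ee1 (setIC e2 e1) e12x (setIC e2 e) ee2 !eqxx.
Qed.

Lemma card_adm2_split : card_adm r [:: e1; e2] = #|stars| + #|nonstars|.
Proof.
rewrite /card_adm -(cardID stars); congr (_ + _); apply: eq_card => e; rewrite !inE /=.
apply: andb_idl => e_star; have : stars e by [].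
by rewrite -star_adm_iff => /andP[].
Qed.

Lemma cardsU_star : #|e1 :|: e2| = (2 * r).-1.
Proof. by have := cardsUI e1 e2; rewrite e12x cards1 e1_r e2_r addn1 addnn -mul2n => <-. Qed.

Lemma card_stars_ge : 'C(n - (2 * r).-1, r.-1) <= #|stars|.
Proof.
rewrite -cardsU_star -cardsC_ord -cards_draws.
have dx Q : Q \in draws (~: (e1 :|: e2)) r.-1 ->
    [/\ [disjoint Q & e1], [disjoint Q & e2] & x \notin Q].
  move=> /disjoint_draws dQ; have dQ1 := disjointWr (subsetUl e1 e2) dQ.
  split; [exact: dQ1 | exact: disjointWr (subsetUr e1 e2) dQ |].
  by apply/negP => /(disjointFr dQ1); rewrite x_e1.
apply: (@leq_card_in_inj _ _ _ _ (fun Q => x |: Q)).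
  by move=> Q Q' /dx[_ _ xQ] /dx[_ _ xQ'] eQ; rewrite -(setU1K xQ) eQ setU1K.
move=> Q QD; have [dQ1 dQ2 xQ] := dx Q QD; move: QD; rewrite inE => /andP[_ /eqP Q_r].
rewrite inE cardsU1 xQ Q_r add1n prednK; last exact: ltnW.
by rewrite (setU1I_set1 x_e1 dQ1) (setU1I_set1 x_e2 dQ2) !eqxx.
Qed.

Lemma card_stars_le : #|stars| <= 'C(n.-1, r.-1).
Proof.
rewrite -[n in 'C(n.-1, _)]card_ord -(cardsC1 x) -cards_draws.
have x_star e : stars e -> x \in e by case/and3P => _ /eqP /in_setI1[].
apply: (@leq_card_in_inj _ _ _ _ (fun e => e :\ x)).
  by move=> e f /x_star xe /x_star xf ef; rewrite -(setD1K xe) ef setD1K.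
move=> e e_star; have xe := x_star e e_star; case/and3P: e_star => /eqP e_r _ _.
rewrite inE -e_r (cardsD1 x e) xe add1n eqxx andbT.
by apply/subsetP => z; rewrite !inE => /andP[].
Qed.

Lemma card_nonstars_ge : (r.-1 * r.-1) * 'C(n - (2 * r).-1, r - 2) <= #|nonstars|.
Proof.
rewrite -cardsU_star -cardsC_ord -cards_draws -{1}e1x_r -e2x_r -!cardsX.
pose f (p : 'I_n * 'I_n * {set 'I_n}) := p.1.1 |: (p.1.2 |: p.2).
have key a b Q : ((a, b), Q) \in setX (setX (e1 :\ x) (e2 :\ x)) (draws (~: (e1 :|: e2)) (r - 2)) ->
  [/\ f (a, b, Q) :&: e1 = [set a], f (a, b, Q) :&: e2 = [set b], a != x,
      f (a, b, Q) :\ a :\ b = Q & #|f (a, b, Q)| = r].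
  rewrite !in_setX /= => /andP[/andP[+ +] QD]; rewrite !inE => /andP[ax ae1] /andP[bx be2].
  have dQ := disjoint_draws QD; move: QD; rewrite inE => /andP[_ /eqP Q_r].
  have dQ1 := disjointWr (subsetUl e1 e2) dQ; have dQ2 := disjointWr (subsetUr e1 e2) dQ.
  have be1 : b \notin e1 by apply: contra bx => be1; rewrite (in_e12 be1 be2).
  have ae2 : a \notin e2 by apply: contra ax => ae2; rewrite (in_e12 ae1 ae2).
  have aQ : a \notin Q by apply/negP => /(disjointFr dQ1); rewrite ae1.
  have bQ : b \notin Q by apply/negP => /(disjointFr dQ2); rewrite be2.
  have ab : a != b by apply: contraNneq be1 => <-.
  have abQ : a \notin b |: Q by rewrite !inE negb_or ab.
  rewrite /f /= setU1I_set1 ?disjointsU1 // setU1K // setU1K // cardsU1 abQ cardsU1 bQ Q_r.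
  by rewrite setUCA setU1I_set1 ?disjointsU1 // !add1n -add2n subnKC.
apply: (@leq_card_in_inj _ _ _ _ f).
  move=> [[a b] Q] [[a' b'] Q'] /key[p1 p2 _ pQ _] /key[q1 q2 _ qQ _] eq_f.
  have eqa : a = a' by apply: set1_inj; rewrite -p1 -q1 eq_f.
  have eqb : b = b' by apply: set1_inj; rewrite -p2 -q2 eq_f.
  by rewrite -pQ -qQ eq_f eqa eqb.
move=> [[a b] Q] /key[p1 p2 ax _ p_r]; rewrite !inE /= p1 (inj_eq set1_inj) (negbTE ax).
have fx : x \notin f (a, b, Q).
  by apply: contraNN ax => xf; rewrite eq_sym -in_set1 -p1 inE xf x_e1.
rewrite /admissible /edge /= p_r eqxx !inE -!setI_eq0 p1 p2 !set1_neq0 andbT.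
by rewrite /= negb_or andbT; apply/andP; split; apply: (contraNneq _ fx) => ->.
Qed.

Lemma card_nonstars_in_le :
  #|[predI nonstars & [pred e : {set 'I_n} | x \in e]]| <= (2 * r).-1 * 'C(n, r - 2).
Proof.
rewrite -cardsU_star -card_draws_setT -cardsX.
apply: (@leq_card_onto _ _ _ _ (fun p : 'I_n * {set 'I_n} => x |: (p.1 |: p.2))).
move=> e; rewrite !inE /= => /andP[/andP[e_nstar /and3P[/eqP e_r _ _]] xe].
rewrite e_r eqxx /= in e_nstar.
have [y ye /andP[yx y12]] : exists2 y, y \in e & (y != x) && (y \in e1 :|: e2).
  case: eqP e_nstar => [_ /= | /eqP ee1 _].
    have xe2 : x \in e :&: e2 by rewrite inE xe x_e2.
    move=> /(exists_other_elt xe2)[y]; rewrite inE => /andP[ye ye2] yx.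
    by exists y; rewrite // yx inE ye2 orbT.
  have xe1 : x \in e :&: e1 by rewrite inE xe x_e1.
  have [y] := exists_other_elt xe1 ee1; rewrite inE => /andP[ye ye1] yx.
  by exists y; rewrite // yx inE ye1.
have xy : x != y by rewrite eq_sym.
have [e_eq e_xy] := setD12K xe ye xy.
by exists (y, e :\ x :\ y); rewrite // in_setX /= y12 inE subsetT e_xy e_r eqxx.
Qed.

Lemma card_nonstars_notin_le :
  #|[predD nonstars & [pred e : {set 'I_n} | x \in e]]| <= (r.-1 * r.-1) * 'C(n, r - 2).
Proof.
rewrite -card_draws_setT -{1}e1x_r -e2x_r -!cardsX.
apply: (@leq_card_onto _ _ _ _ (fun p : 'I_n * 'I_n * {set 'I_n} => p.1.1 |: (p.1.2 |: p.2))).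
move=> e; rewrite !inE /= => /andP[xe /andP[_ /and5P[/eqP e_r _ m1 m2 _]]].
have [a ae ae1] := meetP m1; have [b be be2] := meetP m2.
have ax : a != x by apply: contraNneq xe => <-.
have bx : b != x by apply: contraNneq xe => <-.
have ab : a != b by apply: contraNneq ax => eab; rewrite (in_e12 ae1) // eab.
have [e_eq e_ab] := setD12K ae be ab.
by exists ((a, b), e :\ a :\ b); rewrite // !in_setX /= !inE ax ae1 bx be2 subsetT e_ab e_r eqxx.
Qed.

Lemma card_nonstars_le :
  #|nonstars| <= (2 * r).-1 * 'C(n, r - 2) + (r.-1 * r.-1) * 'C(n, r - 2).
Proof. exact: leq_card_split card_nonstars_in_le card_nonstars_notin_le. Qed.

End SecondStep.

Lemma is_star_one_meet n r (e1 e2 e3 : {set 'I_n}) :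
  admissible r [:: e1] e2 -> is_star [:: e1; e2; e3] -> #|e1 :&: e2| = 1%N.
Proof.
case/and3P => _ e2_new _ /existsP[y] /and3P[/and3P[_ + _] _ _].
by move: e2_new; rewrite inE eq_sym => /negbTE -> /eqP ->; rewrite cards1.
Qed.

Lemma bin_sub_le m i k : 'C(m, i.+1) <= 'C(m - k, i.+1) + k * 'C(m, i).
Proof.
elim: k => [|k IH]; first by rewrite subn0 addn0.
apply: leq_trans IH _; rewrite mulSn addnCA addnA leq_add2r.
case: (posnP (m - k)) => [->|m_gt_k]; first by rewrite bin0n.
have -> : m - k = (m - k.+1).+1 by rewrite subnS prednK.
by rewrite binS addnC leq_add2r leq_bin2l // leq_subr.
Qed.

Open Scope R_scope.

(* plus_INR and mult_INR, stated with ssrnat's addn and muln so that they can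
   be used for rewriting. *)
Lemma INR_addn a b : INR (a + b)%N = INR a + INR b.
Proof. exact: plus_INR. Qed.

Lemma INR_muln a b : INR (a * b)%N = INR a * INR b.
Proof. exact: mult_INR. Qed.

Lemma INR_subn a b : (b <= a)%N -> INR (a - b)%N = INR a - INR b.
Proof. by move=> le_ba; rewrite -{2}(subnK le_ba) INR_addn; ring. Qed.

Lemma INR_leq a b : (a <= b)%N -> INR a <= INR b.
Proof. by move/leP/le_INR. Qed.

Lemma INR_predn m : (0 < m)%N -> INR m.-1 = INR m - 1.
Proof. by move=> m_gt0; rewrite -subn1 INR_subn. Qed.

Lemma Rinv_INR_ge0 m : 0 <= / INR m.
Proof.
case: m => [|m]; first by rewrite Rinv_0; apply: Rle_refl.
by apply/Rlt_le/Rinv_0_lt_compat/lt_0_INR/ltP.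
Qed.

Lemma Rdiv_le_of_cross x y z t : 0 < y -> 0 < t -> x * t <= z * y -> x / y <= z / t.
Proof.
move=> y_pos t_pos le_xt; apply: (Rmult_le_reg_r (y * t)); first exact: Rmult_lt_0_compat.
have -> : x / y * (y * t) = x * t by field; lra.
by have -> : z / t * (y * t) = z * y by field; lra.
Qed.

Lemma Rle_div_of_mul_le x y t : 0 < t -> x * t <= y -> x <= y / t.
Proof.
move=> t_pos le_xt; apply: (Rmult_le_reg_r t) => //.
by rewrite /Rdiv Rmult_assoc Rinv_l ?Rmult_1_r //; apply: Rgt_not_eq.
Qed.

Lemma Rdiv_le_of_le_mul x y t : 0 < t -> x <= y * t -> x / t <= y.
Proof.
move=> t_pos le_xt; apply: (Rmult_le_reg_r t) => //.
by rewrite /Rdiv Rmult_assoc Rinv_l ?Rmult_1_r //; apply: Rgt_not_eq.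
Qed.


Section RealSums.
Variable T : finType.
Implicit Types (P Q : pred T) (f g : T -> R).

Lemma eq_rsum P f g : (forall x, f x = g x) -> rsum P f = rsum P g.
Proof. by move=> fg; rewrite /rsum; elim: (enum P) => //= x s ->; rewrite fg. Qed.

Lemma rsum_le P f g : (forall x, P x -> f x <= g x) -> rsum P f <= rsum P g.
Proof.
move=> fg; rewrite /rsum; have : all P (enum P) by apply/allP => x; rewrite mem_enum.
by elim: (enum P) => /= [|x s IH /andP[Px /IH]]; [lra | have := fg x Px; lra].
Qed.

Lemma rsum_const P c : rsum P (fun _ => c) = INR #|P| * c.
Proof.
rewrite /rsum cardE; elim: (enum P) => [|x s IH]; first by rewrite /=; lra.
by rewrite [foldr _ _ _]/= IH (S_INR (size s)); lra.
Qed.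

Lemma rsum_indicator P Q c :
  rsum P (fun x => if Q x then c else 0) = INR #|[predI P & Q]| * c.
Proof.
have -> : #|[predI P & Q]| = count Q (enum P).
  rewrite cardE -size_filter /enum_mem -filter_predI; congr size; apply: eq_filter => x.
  by rewrite !inE andbC.
rewrite /rsum; elim: (enum P) => [|x s IH]; first by rewrite /=; lra.
have -> : count Q (x :: s) = (Q x + count Q s)%N by [].
by rewrite [foldr _ _ _]/= IH; case: (Q x); rewrite ?add0n ?add1n ?(S_INR (count Q s)); lra.
Qed.

End RealSums.

Definition star_completions n r (e1 e2 : {set 'I_n}) : pred {set 'I_n} :=
  fun e3 => admissible r [:: e1; e2] e3 && is_star [:: e1; e2; e3].

Definition star_ratio n r (e1 e2 : {set 'I_n}) : R :=
  INR #|star_completions r e1 e2| / INR (card_adm r [:: e1; e2]).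

Lemma star_ratio_eq0 n r (e1 e2 : {set 'I_n}) :
  admissible r [:: e1] e2 -> #|e1 :&: e2| != 1%N -> star_ratio r e1 e2 = 0.
Proof.
move=> e2_adm e12_n1; rewrite /star_ratio (_ : #|_| = 0%N) /Rdiv ?Rmult_0_l //.
by apply: eq_card0 => e3; apply/negP => /andP[_ /(is_star_one_meet e2_adm)] /eqP; apply/negP.
Qed.

Section Averaging.
Variables n r : nat.
Let N := INR #|[pred e : {set 'I_n} | edge r e]|.
Let A1 (e1 : {set 'I_n}) := INR (card_adm r [:: e1]).
Hypothesis edges_gt0 : (0 < #|[pred e : {set 'I_n} | edge r e]|)%N.
Hypothesis adm1_gt0 : forall e1 : {set 'I_n}, edge r e1 -> (0 < card_adm r [:: e1])%N.

Let N_gt0 : 0 < N. Proof. exact/lt_0_INR/ltP. Qed.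
Let A1_gt0 e1 : edge r e1 -> 0 < A1 e1. Proof. by move/adm1_gt0/ltP/lt_0_INR. Qed.

Lemma probA3E : probA3 n r = rsum (edge r) (fun e1 =>
  rsum (admissible r [:: e1]) (fun e2 => star_ratio r e1 e2 * (/ N * / A1 e1))).
Proof.
apply: eq_rsum => e1; apply: eq_rsum => e2.
rewrite rsum_const /star_ratio /Rdiv [RHS]Rmult_assoc.
by rewrite (Rmult_comm (/ INR (card_adm r [:: e1; e2]))).
Qed.

Lemma probA3_ge k lo : 0 <= lo ->
  (forall e1 : {set 'I_n}, edge r e1 -> k * A1 e1 <= INR #|one_meet r e1|) ->
  (forall (e1 e2 : {set 'I_n}) x, edge r e1 -> admissible r [:: e1] e2 -> e1 :&: e2 = [set x] ->
     lo <= star_ratio r e1 e2) ->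
  k * lo <= probA3 n r.
Proof.
move=> lo_ge0 one_meet_ge ratio_ge; rewrite probA3E.
apply: Rle_trans (_ : rsum (edge r) (fun _ => k * lo / N) <= _).
  by rewrite rsum_const (_ : INR #|_| = N) //; apply: Req_le; field; apply: Rgt_not_eq.
apply: rsum_le => e1 e1_edge; have a1_gt0 := A1_gt0 e1_edge; have k_le := one_meet_ge e1 e1_edge.
set a1 := A1 e1 in a1_gt0 k_le *.
have inv_ge0 : 0 <= / N * / a1.
  by apply/Rlt_le/Rmult_lt_0_compat; apply: Rinv_0_lt_compat.
have w_ge0 : 0 <= lo * (/ N * / a1) by apply: Rmult_le_pos.
apply: Rle_trans (_ : rsum (admissible r [:: e1])
    (fun e2 => if #|e1 :&: e2| == 1%N then lo * (/ N * / a1) else 0) <= _).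
  rewrite rsum_indicator (@eq_card _ _ (one_meet r e1)) => [|e]; last by rewrite !inE.
  apply: Rle_trans (Rmult_le_compat_r _ _ _ w_ge0 k_le).
  by apply: Req_le; field; split; apply: Rgt_not_eq.
apply: rsum_le => e2 e2_adm; case: eqP => [/eqP/cards1P[x e12x] | /eqP e12_n1].
  by apply: Rmult_le_compat_r => //; apply: ratio_ge e12x.
by rewrite star_ratio_eq0 // Rmult_0_l; apply: Rle_refl.
Qed.

Lemma probA3_le hi : 0 <= hi ->
  (forall (e1 e2 : {set 'I_n}) x, edge r e1 -> admissible r [:: e1] e2 -> e1 :&: e2 = [set x] ->
     star_ratio r e1 e2 <= hi) ->
  probA3 n r <= hi.
Proof.
move=> hi_ge0 ratio_le; rewrite probA3E.
apply: Rle_trans (_ : rsum (edge r) (fun _ => hi / N) <= _); last first.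
  by rewrite rsum_const (_ : INR #|_| = N) //; apply: Req_le; field; apply: Rgt_not_eq.
apply: rsum_le => e1 e1_edge; have a1_gt0 := A1_gt0 e1_edge; set a1 := A1 e1 in a1_gt0 *.
have inv_ge0 : 0 <= / N * / a1.
  by apply/Rlt_le/Rmult_lt_0_compat; apply: Rinv_0_lt_compat.
apply: Rle_trans (_ : rsum (admissible r [:: e1]) (fun _ => hi * (/ N * / a1)) <= _).
  apply: rsum_le => e2 e2_adm; apply: Rmult_le_compat_r => //.
  case: (boolP (#|e1 :&: e2| == 1%N)) => [/cards1P[x e12x] | e12_n1].
    exact: ratio_le e12x.
  by rewrite star_ratio_eq0.
by rewrite rsum_const (_ : INR #|_| = a1) //; apply: Req_le; field; split; apply: Rgt_not_eq.
Qed.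

End Averaging.





Lemma INR_bin_sub_ge m k j : (j <= m)%N ->
  INR 'C(m, j) * (1 - INR k * INR j / (INR m - INR j + 1)) <= INR 'C(m - k, j).
Proof.
case: j => [_|i le_im]; first by rewrite !bin0 /=; lra.
have m_pos : 0 < INR m - INR i.+1 + 1.
  by have := INR_leq le_im; rewrite !S_INR; lra.
have rec : INR i.+1 * INR 'C(m, i.+1) = (INR m - INR i.+1 + 1) * INR 'C(m, i).
  have := congr1 INR (mul_bin_left m i); rewrite !INR_muln INR_subn ?(ltnW le_im) // => ->.
  by rewrite S_INR; ring.
have := INR_leq (bin_sub_le m i k); rewrite INR_addn INR_muln => sub_le.
have C_i : INR 'C(m, i) = INR i.+1 * INR 'C(m, i.+1) / (INR m - INR i.+1 + 1).
  by rewrite rec; field; apply: Rgt_not_eq.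
by move: sub_le; rewrite C_i /Rdiv; lra.
Qed.

Lemma first_step_ineq E A B d : 0 <= d <= 2 / 15 -> 0 <= B ->
  B * (1 - d) <= E -> A <= E + B * d -> (1 - 2 * d) * A <= E.
Proof. move=> *; nra. Qed.


Lemma star_ratio_ineq S T B a d : 0 < B -> 0 <= a -> 0 <= d <= 2 / 15 ->
  B * (1 - 2 * d) <= S <= B -> a * (1 - 2 * d) * B <= T <= 2 * d * B + a * (1 + d) * B ->
  (1 - 2 * d) / (1 + a * (1 + d)) <= S / (S + T) <= 1 / (1 + a * (1 - 2 * d)).
Proof.
move=> B_pos a_ge0 d_bnd [S_ge S_le] [T_ge T_le].
have a_d : 0 <= a * (1 - 2 * d) by nra.
have S_pos : 0 < S by nra.
have T_ge0 : 0 <= T by nra.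
by split; apply: Rdiv_le_of_cross; nra.
Qed.

Lemma prob_near_one_ineq P a d : 0 <= a -> 0 <= d <= 2 / 15 ->
  (1 - 2 * d) * ((1 - 2 * d) / (1 + a * (1 + d))) <= P <= 1 / (1 + a * (1 - 2 * d)) ->
  Rabs (P * (1 + a) - 1) <= 5 * d.
Proof.
move=> a_ge0 d_bnd [P_ge P_le]; have ad_ge0 : 0 <= a * d by nra.
have P_ge' : (1 - 5 * d) / (1 + a) <= P.
  apply: Rle_trans P_ge; rewrite Rmult_div_assoc; apply: Rdiv_le_of_cross; nra.
have P_le' : P <= (1 + 4 * d) / (1 + a) by apply: Rle_trans P_le _; apply: Rdiv_le_of_cross; nra.
have a1_ge0 : 0 <= 1 + a by lra.
have mul_a1 x : x / (1 + a) * (1 + a) = x by field; lra.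
apply: Rabs_le; split.
- by have := Rmult_le_compat_r _ _ _ a1_ge0 P_ge'; rewrite mul_a1; lra.
- by have := Rmult_le_compat_r _ _ _ a1_ge0 P_le'; rewrite mul_a1; lra.
Qed.




Section Estimates.
Variables n r : nat.
Hypotheses (r_gt1 : (1 < r)%N) (n_big : (8 * (r * r) <= n)%N).

Let rR := INR r.
Let nR := INR n.
Let B := INR 'C(n, r.-1).
Let C := INR 'C(n, r - 2).
Let d := rR * rR / (nR - rR).
Let a := (rR - 1) ^ 3 / nR.

Let r_le_n : (r <= n)%N. Proof. nia. Qed.
Let rR_ge2 : 2 <= rR. Proof. exact: INR_leq r_gt1. Qed.
Let nR_big : 8 * (rR * rR) <= nR.
Proof. by have := INR_leq n_big; rewrite !INR_muln /= /rR /nR; lra. Qed.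
Let nR_pos : 0 < nR. Proof. nra. Qed.
Let nrR_big : 15 * nR <= 16 * (nR - rR). Proof. nra. Qed.

Lemma delta_bounds : 0 <= d <= 2 / 15.
Proof.
have nr_pos : 0 < nR - rR by lra.
split; first by apply: Rmult_le_pos; [nra | apply/Rlt_le/Rinv_0_lt_compat].
by apply: Rdiv_le_of_cross; nra.
Qed.

Let B_pos : 0 < B. Proof. by apply/lt_0_INR/ltP; rewrite bin_gt0; lia. Qed.
Let C_ge0 : 0 <= C. Proof. exact: pos_INR. Qed.

Lemma bin_ratio : C * (nR - rR + 2) = B * (rR - 1).
Proof.
have r2S : (r - 2).+1 = r.-1 by lia.
have := congr1 INR (mul_bin_left n (r - 2)); rewrite r2S !INR_muln !INR_subn ?INR_predn //; try lia.
by rewrite /C /B /nR /rR /=; lra.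
Qed.

Let C_nr_le : C * (nR - rR) <= B * (rR - 1).
Proof. by have := bin_ratio; lra. Qed.

Lemma r_C_le : rR * C <= d * B.
Proof.
have nr_pos : 0 < nR - rR by lra.
have -> : d * B = rR * (rR * B) / (nR - rR) by rewrite /d /Rdiv; ring.
have rR_ge0 : 0 <= rR by lra.
by apply: Rle_div_of_mul_le => //; have := Rmult_le_compat_l _ _ _ rR_ge0 C_nr_le; nra.
Qed.

Lemma a_B_le : a * B <= (rR - 1) ^ 2 * C.
Proof.
have -> : a * B = (rR - 1) ^ 2 * (B * (rR - 1)) / nR by rewrite /a /Rdiv; ring.
apply: Rdiv_le_of_le_mul => //; rewrite Rmult_assoc; apply: Rmult_le_compat_l.
  by apply: pow_le; lra.
by rewrite -bin_ratio; apply: Rmult_le_compat_l => //; lra.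
Qed.

Lemma sq_C_le : (rR - 1) ^ 2 * C <= a * (1 + d) * B.
Proof.
have nr_pos : 0 < nR - rR by lra.
have sq_ge0 : 0 <= (rR - 1) ^ 2 by apply: pow_le; lra.
set X := (rR - 1) ^ 2 * (B * (rR - 1)).
have X_ge0 : 0 <= X by apply: Rmult_le_pos => //; apply: Rmult_le_pos; lra.
apply: Rle_trans (_ : X / (nR - rR) <= _).
  by apply: Rle_div_of_mul_le => //; rewrite Rmult_assoc; apply: Rmult_le_compat_l.
have -> : a * (1 + d) * B = X * (nR - rR + rR * rR) / (nR * (nR - rR)).
  by rewrite /X /a /d; field; lra.
apply: Rdiv_le_of_cross; [lra | nra | ].
rewrite Rmult_assoc; apply: Rmult_le_compat_l => //; nra.
Qed.

Lemma bin_sub_ge k j c : (j < r)%N -> INR k * rR <= c * (nR - rR) ->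
  INR 'C(n, j) * (1 - c) <= INR 'C(n - k, j).
Proof.
move=> j_lt_r kc; have j_le_r : INR j <= rR by apply/INR_leq/ltnW.
have k_ge0 := pos_INR k; have c_ge0 : 0 <= c by nra.
apply: Rle_trans (INR_bin_sub_ge k (leq_trans (ltnW j_lt_r) r_le_n)).
apply: Rmult_le_compat_l; first exact: pos_INR.
suff : INR k * INR j / (INR n - INR j + 1) <= c by lra.
by apply: Rdiv_le_of_le_mul; rewrite -/nR; nra.
Qed.

Lemma one_meet_ratio (e1 : {set 'I_n}) : #|e1| = r ->
  (1 - 2 * d) * INR (card_adm r [:: e1]) <= INR #|one_meet r e1|.
Proof.
move=> e1_r; have := INR_leq (card_one_meet_ge r_gt1 e1_r); rewrite INR_muln => E_ge.
have := INR_leq (card_adm1_le e1_r); rewrite INR_addn !INR_muln => A_le.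
have bin : B * (1 - d) <= INR 'C(n - r, r.-1).
  by apply: bin_sub_ge; [rewrite prednK // ltnW | rewrite -/rR /d; apply: Req_le; field; lra].
apply: (first_step_ineq (B := rR * B) delta_bounds).
- by apply: Rmult_le_pos; lra.
- by apply: Rle_trans E_ge; rewrite Rmult_assoc; apply: Rmult_le_compat_l => //; lra.
- by apply: Rle_trans A_le _; have := r_C_le; rewrite -/C -/rR; nra.
Qed.

Let a_ge0 : 0 <= a.
Proof. by apply: Rmult_le_pos; [apply: pow_le; lra | apply/Rlt_le/Rinv_0_lt_compat]. Qed.

Lemma star_ratio_bounds (e1 e2 : {set 'I_n}) x :
  #|e1| = r -> #|e2| = r -> e1 :&: e2 = [set x] ->
  (1 - 2 * d) / (1 + a * (1 + d)) <= star_ratio r e1 e2 <= 1 / (1 + a * (1 - 2 * d)).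
Proof.
move=> e1_r e2_r e12x; have [d_ge0 d_le] := delta_bounds.
have r_pos : (0 < r)%N by apply: ltnW.
have two_r : INR (2 * r).-1 = 2 * rR - 1.
  by rewrite INR_predn ?muln_gt0 // INR_muln /= -/rR; ring.
have two_r_d : INR (2 * r).-1 * rR <= 2 * d * (nR - rR).
  by rewrite two_r /d; apply: Rle_trans (_ : 2 * rR * rR <= _); [nra | apply: Req_le; field; lra].
have S_eq : #|star_completions r e1 e2| = #|stars r e1 e2 x|.
  by apply: eq_card => e; rewrite unfold_in /= (star_adm_iff r_gt1 e1_r e2_r e12x).
rewrite /star_ratio (card_adm2_split r_gt1 e1_r e2_r e12x) S_eq INR_addn.
have r1 : INR r.-1 = rR - 1 by rewrite INR_predn.
apply: (star_ratio_ineq (B := B)) => //; split.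
- apply: Rle_trans (INR_leq (card_stars_ge r_gt1 e1_r e2_r e12x)).
  by apply: bin_sub_ge; rewrite ?prednK.
- apply: Rle_trans (INR_leq (card_stars_le r e1 e2 x)) (INR_leq _).
  exact/leq_bin2l/leq_pred.
- apply: Rle_trans (INR_leq (card_nonstars_ge r_gt1 e1_r e2_r e12x)).
  have bin : C * (1 - 2 * d) <= INR 'C(n - (2 * r).-1, r - 2).
    by apply: bin_sub_ge two_r_d; rewrite ltn_subrL r_pos.
  have := a_B_le; have sq_ge0 : 0 <= (rR - 1) ^ 2 by apply: pow_le; lra.
  by rewrite !INR_muln r1; nra.
- apply: Rle_trans (INR_leq (card_nonstars_le e1_r e2_r e12x)) _.
  rewrite INR_addn !INR_muln two_r r1 -/C.
  by have := r_C_le; have := sq_C_le; nra.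
Qed.

Lemma probA3_near : Rabs (probA3 n r * (1 + a) - 1) <= 10 * (rR * rR / nR).
Proof.
have [d_ge0 d_le] := delta_bounds.
have d_le_sq : 5 * d <= 10 * (rR * rR / nR).
  rewrite /d !Rmult_div_assoc; apply: Rdiv_le_of_cross; nra.
apply: Rle_trans d_le_sq.
have edges_gt0 : (0 < #|[pred e : {set 'I_n} | edge r e]|)%N.
  rewrite (eq_card (B := [set A : {set 'I_n} | #|A| == r])) => [|A]; last by rewrite !inE.
  by rewrite card_draws card_ord bin_gt0.
have adm1_gt0 (e1 : {set 'I_n}) : edge r e1 -> (0 < card_adm r [:: e1])%N.
  move=> /eqP e1_r; have pos : (0 < r * 'C(n - r, r.-1))%N.
    by rewrite muln_gt0 bin_gt0; apply/andP; split; nia.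
  apply: leq_trans pos (leq_trans (card_one_meet_ge r_gt1 e1_r) (subset_leq_card _)).
  by apply/subsetP => e; rewrite !inE => /andP[].
have one_a_pos c : 0 <= c -> 0 < 1 + a * c.
  by move=> c_ge0; have := Rmult_le_pos _ _ a_ge0 c_ge0; lra.
apply: prob_near_one_ineq a_ge0 delta_bounds _; split.
- apply: (probA3_ge edges_gt0 adm1_gt0) => [|e1 /eqP e1_r|e1 e2 x /eqP e1_r e2_adm e12x].
  + by apply: Rmult_le_pos; [lra | apply/Rlt_le/Rinv_0_lt_compat/one_a_pos; lra].
  + exact: one_meet_ratio.
  + by case/and3P: e2_adm => /eqP e2_r _ _; case: (star_ratio_bounds e1_r e2_r e12x).
- apply: (probA3_le edges_gt0 adm1_gt0) => [|e1 e2 x /eqP e1_r e2_adm e12x].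
  + by apply: Rmult_le_pos; [lra | apply/Rlt_le/Rinv_0_lt_compat/one_a_pos; lra].
  + by case/and3P: e2_adm => /eqP e2_r _ _; case: (star_ratio_bounds e1_r e2_r e12x).
Qed.

End Estimates.

Section Limits.
Implicit Types (u v : nat -> R) (l : R).

Lemma Un_cv_eventually_eq u v l N :
  (forall n, (N <= n)%N -> u n = v n) -> Un_cv u l -> Un_cv v l.
Proof.
move=> uv u_l e e_pos; have [M uM] := u_l e e_pos.
exists (maxn M N) => n /leP; rewrite geq_max => /andP[Mn Nn].
by rewrite -uv //; apply/uM/leP.
Qed.

Lemma Un_cv_dominated u v N :
  (forall n, (N <= n)%N -> Rabs (u n) <= v n) -> Un_cv v 0 -> Un_cv u 0.
Proof.
move=> uv v_0 e e_pos; have [M vM] := v_0 e e_pos.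
exists (maxn M N) => n /leP; rewrite geq_max => /andP[Mn Nn].
have := vM n (leP Mn); have := uv n Nn; rewrite /R_dist !Rminus_0_r => u_le.
by move/Rabs_def2 => [v_lt _]; lra.
Qed.

Lemma Un_cv_inv u l : Un_cv u l -> l <> 0 -> Un_cv (fun n => / u n) (/ l).
Proof.
move=> u_l l0.
have inv_cont := continuity_pt_inv _ _ (derivable_continuous_pt _ _ (derivable_pt_id l)) l0.
exact: (continuity_seq _ _ _ inv_cont u_l).
Qed.

Lemma Un_cv_const l : Un_cv (fun _ => l) l.
Proof. by move=> e e_pos; exists 0%N => n _; rewrite /R_dist Rminus_diag Rabs_R0. Qed.

End Limits.

Lemma sq_div_sqrt x m : (x / sqrt (INR m)) * (x / sqrt (INR m)) = x * x / INR m.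
Proof.
rewrite {3}(_ : INR m = sqrt (INR m) * sqrt (INR m)); last by rewrite sqrt_sqrt //; apply: pos_INR.
by rewrite /Rdiv Rinv_mult; ring.
Qed.

Lemma cube_div_root3 x m : (0 < m)%N -> (x / Rpower (INR m) (1 / 3)) ^ 3 = x ^ 3 / INR m.
Proof.
move=> m_gt0; have m_pos : 0 < INR m by apply/lt_0_INR/ltP.
have t_pos : 0 < Rpower (INR m) (1 / 3) by apply: exp_pos.
have t3 : Rpower (INR m) (1 / 3) ^ 3 = INR m.
  rewrite -(Rpower_pow 3 _ t_pos) Rpower_mult -[RHS](Rpower_1 _ m_pos); congr Rpower.
  by rewrite (INR_IZR_INZ 3) /=; field.
by rewrite -{2}t3; field; apply: Rgt_not_eq.
Qed.

Lemma sq_div_sqrt_cv0 (x : nat -> R) :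
  Un_cv (fun n => x n / sqrt (INR n)) 0 -> Un_cv (fun n => x n * x n / INR n) 0.
Proof.
move=> x_cv0; have := CV_mult _ _ _ _ x_cv0 x_cv0; rewrite Rmult_0_r.
by apply: Un_cv_ext => n; apply: sq_div_sqrt.
Qed.


Section Asymptotics.
Variable r : nat -> nat.
Hypothesis r_ge2 : forall n, (2 <= r n)%N.
Hypothesis r_sq_cv0 : Un_cv (fun n => INR (r n) * INR (r n) / INR n) 0.

Let rR n := INR (r n).
Let a n := (rR n - 1) ^ 3 / INR n.

Let rR_ge2 n : 2 <= rR n. Proof. exact: INR_leq (r_ge2 n). Qed.
Let a_ge0 n : 0 <= a n.
Proof. by apply: Rmult_le_pos; [apply: pow_le; have := rR_ge2 n; lra | apply: Rinv_INR_ge0]. Qed.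

Lemma eventually_sq_le : exists N, forall n, (N <= n)%N -> (8 * (r n * r n) <= n)%N.
Proof.
have e_pos : 0 < 1 / 8 by lra.
have [M M_small] := r_sq_cv0 e_pos.
exists (maxn M 1) => n; rewrite geq_max => /andP[Mn n_gt0].
have n_pos : 0 < INR n by apply/lt_0_INR/ltP.
have := M_small n (leP Mn); rewrite /R_dist Rminus_0_r => /Rabs_def2[small _].
set q := INR (r n) * INR (r n) / INR n in small.
have sq_eq : INR (r n) * INR (r n) = q * INR n by rewrite /q; field; lra.
by apply/leP/INR_le; rewrite !INR_muln /= sq_eq; nra.
Qed.

Definition eps_prob n := 1 - probA3 n (r n) * (1 + a n).

Lemma eps_prob_cv0 : Un_cv eps_prob 0.
Proof.
have [N N_big] := eventually_sq_le.
apply: (@Un_cv_dominated _ (fun n => 10 * (rR n * rR n / INR n)) N).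
  by move=> n /N_big n_big; rewrite /eps_prob Rabs_minus_sym; apply: probA3_near.
by have := CV_mult _ _ _ _ (Un_cv_const 10) r_sq_cv0; rewrite Rmult_0_r.
Qed.

Lemma probA3E_eps n : probA3 n (r n) = (1 - eps_prob n) / (1 + a n).
Proof. by rewrite /eps_prob; field; have := a_ge0 n; lra. Qed.

Lemma rpred_cube_div_cv c : Un_cv (fun n => rR n / Rpower (INR n) (1 / 3)) c -> Un_cv a (c ^ 3).
Proof.
move=> root3_c.
have cube_c : Un_cv (fun n => rR n ^ 3 / INR n) (c ^ 3).
  apply: (@Un_cv_eventually_eq (fun n => (rR n / Rpower (INR n) (1 / 3)) ^ 3) _ _ 1%N).
    by move=> n; apply: cube_div_root3.
  have cube := CV_mult _ _ _ _ root3_c (Un_cv_const 1).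
  exact: CV_mult _ _ _ _ root3_c (CV_mult _ _ _ _ root3_c cube).
have diff_0 : Un_cv (fun n => a n - rR n ^ 3 / INR n) 0.
  apply: (@Un_cv_dominated _ (fun n => 7 * (rR n * rR n / INR n)) 0%N).
    move=> n _; have r2 := rR_ge2 n.
    have num_le : Rabs ((rR n - 1) ^ 3 - rR n ^ 3) <= 7 * (rR n * rR n) by apply: Rabs_le; nra.
    rewrite /a /Rdiv -Rmult_minus_distr_r Rabs_mult (Rabs_pos_eq _ (Rinv_INR_ge0 n)) -Rmult_assoc.
    exact: Rmult_le_compat_r (Rinv_INR_ge0 n) num_le.
  by have := CV_mult _ _ _ _ (Un_cv_const 7) r_sq_cv0; rewrite Rmult_0_r.
have := CV_plus _ _ _ _ diff_0 cube_c; rewrite Rplus_0_l.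
by apply: Un_cv_ext => n; ring.
Qed.

End Asymptotics.

Unset Implicit Arguments.

Theorem lemma2 (r : nat -> nat) :
  (forall n : nat, (2 <= r n)%N) ->
  Un_cv (fun n => INR (r n) / sqrt (INR n)) 0 ->
  (exists (eps1 eps2 : nat -> R),
      Un_cv eps1 0 /\ Un_cv eps2 0 /\
      exists N : nat, forall n : nat, (N <= n)%N ->
        probA3 n (r n) =
          (1 - eps1 n) / (1 + (INR (r n) - 1) ^ 3 / INR n * (1 + eps2 n)))
  /\
  (forall c : R, 0 <= c ->
     Un_cv (fun n => INR (r n) / Rpower (INR n) (1 / 3)) c ->
     Un_cv (fun n => probA3 n (r n)) (1 / (1 + c ^ 3))).
Proof.
move=> r_ge2 r_sqrt; have r_sq := sq_div_sqrt_cv0 r_sqrt.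
split.
  (* The whole error fits in eps1, so eps2 can be taken to be 0. *)
  exists (eps_prob r), (fun _ => 0); split; first exact: eps_prob_cv0.
  split; first exact: Un_cv_const.
  by exists 0%N => n _; rewrite Rplus_0_r Rmult_1_r (probA3E_eps r_ge2).
move=> c c_ge0 r_root3.
have one_c3 : 1 + c ^ 3 <> 0 by have := pow_le _ 3 c_ge0; lra.
have := CV_mult _ _ _ _ (CV_minus _ _ _ _ (Un_cv_const 1) (eps_prob_cv0 r_ge2 r_sq))
  (Un_cv_inv (CV_plus _ _ _ _ (Un_cv_const 1) (rpred_cube_div_cv r_ge2 r_sq r_root3)) one_c3).
by rewrite Rminus_0_r; apply: Un_cv_ext => n; rewrite (probA3E_eps r_ge2).
Qed.
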